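(* Let $d_1,d_2\ge1$ be integers, $p_{i0}<\cdots<p_{id_i}$ reals for $i=1,2$, and $f_i:\{p_{i0},\dots,p_{id_i}\}\to\mathbb{R}$ arbitrary. Let $\sigma=(\sigma_1,\sigma_2)$ with $\sigma_i$ a permutation of $\{0,\dots,d_i\}$ such that $f_i(p_{i,\sigma_i(0)})\le\cdots\le f_i(p_{i,\sigma_i(d_i)})$ for $i=1,2$, and let $\tau=(\tau_1,\tau_2)$ be permutations with $f_1(p_{1,\tau_1(0)})\le\cdots\le f_1(p_{1,\tau_1(d_1)})$ and $f_2(p_{2,\tau_2(0)})\ge\cdots\ge f_2(p_{2,\tau_2(d_2)})$. Put $\psi^\sigma(\boldsymbol{j})=f_1(p_{1,\sigma_1(j_1)})f_2(p_{2,\sigma_2(j_2)})$ and $\psi^\tau(\boldsymbol{j})=f_1(p_{1,\tau_1(j_1)})f_2(p_{2,\tau_2(j_2)})$ for $\boldsymbol{j}\in\{0,\dots,d_1\}\times\{0,\dots,d_2\}$, and $N=d_1+d_2$. Then the set of $(\boldsymbol{x},\boldsymbol{z},\mu)$ with $\boldsymbol{z}\in\{0,1\}^{d_1+d_2}$, $(x_i,\boldsymbol{z}_i)\in B_i$ for $i=1,2$, $\boldsymbol{z}'=(L^\sigma)^{-1}(\boldsymbol{z})$, $\boldsymbol{z}''=(L^\tau)^{-1}(\boldsymbol{z})$ and, for every $\pi\in\Pi$ (with point representation $\boldsymbol{j}^0,\dots,\boldsymbol{j}^N$), $$\mu\le\psi^\sigma(\boldsymbol{j}^0)+\sum_{t\in[N]}(\psi^\sigma(\boldsymbol{j}^t)-\psi^\sigma(\boldsymbol{j}^{t-1}))z'_{\pi_t},\qquad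 \mu\ge\psi^\tau(\boldsymbol{j}^0)+\sum_{t\in[N]}(\psi^\tau(\boldsymbol{j}^t)-\psi^\tau(\boldsymbol{j}^{t-1}))z''_{\pi_t},$$ is an ideal MIP formulation of $\{(\boldsymbol{x},\mu)\in\mathbb{R}^2\times\mathbb{R}:\mu=f_1(x_1)f_2(x_2),\ x_i\in\{p_{i0},\dots,p_{id_i}\},\ i=1,2\}$.
   Context: Here $n=2$. $\Delta^d=\{\boldsymbol{z}\in\mathbb{R}^d:1\ge z_1\ge\cdots\ge z_d\ge0\}$; $\boldsymbol{z}=(\boldsymbol{z}_1,\boldsymbol{z}_2)$, $\boldsymbol{z}_i\in\mathbb{R}^{d_i}$. $B_i=\{(x_i,\boldsymbol{z}_i):x_i=p_{i0}+\sum_{j\in[d_i]}(p_{ij}-p_{i,j-1})z_{ij},\ \boldsymbol{z}_i\in\Delta^{d_i}\}$. A staircase is $\pi=(\pi_1,\dots,\pi_N)$, $\pi_t=(\pi_t(1),\pi_t(2))$, $\pi_t(1)\in\{1,2\}$, each $i$ occurring as $\pi_t(1)$ exactly $d_i$ times, $\pi_t(2)=|\{s\le t:\pi_s(1)=\pi_t(1)\}|$; $\Pi$ is the set of staircases; $z_{\pi_t}:=z_{\pi_t(1),\pi_t(2)}$; point representation $\boldsymbol{j}^0=(0,0)$, $\boldsymbol{j}^t=\boldsymbol{j}^{t-1}+\boldsymbol{e}_{\pi_t(1)}$. For a permutation $\rho_i$ of $\{0,\dots,d_i\}$: $T_i:\boldsymbol{z}_i\mapsto\boldsymbol{\lambda}_i\in\mathbb{R}^{d_i+1}$,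 $\lambda_{ij}=z_{ij}-z_{i,j+1}$ ($j=0,\dots,d_i$, $z_{i0}=1$, $z_{i,d_i+1}=0$), $T_i^{-1}:z_{ij}=\sum_{k=j}^{d_i}\lambda_{ik}$; $P^{\rho_i}$ the permutation matrix with $(j,k)$ entry $1$ iff $j=\rho_i(k)$; $L^{\rho_i}=T_i^{-1}\circ P^{\rho_i}\circ T_i$ and $L^\rho(\boldsymbol{z}')=(L^{\rho_1}(\boldsymbol{z}'_1),L^{\rho_2}(\boldsymbol{z}'_2))$ (an invertible affine map). An MIP formulation of $S$ is a polyhedron with binary restrictions whose projection onto original variables equals $S$; ideal means every vertex of the LP relaxation has binary values in the binary-restricted variables. *)

From HB Require Import structures.
From mathcomp Require Import all_boot all_order all_algebra all_fingroup.
From mathcomp Require Import reals.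
Set Implicit Arguments. Unset Strict Implicit. Unset Printing Implicit Defensive.
Import Order.TTheory GRing.Theory Num.Theory.
Local Open Scope ring_scope.

Section Defs.
Variable R : realType.

(* z_i in R^{d} is a row vector; zget z j = z_{j} for 1 <= j <= d (paper
   1-based indexing), with the conventions z_0 = 1 and z_j = 0 for j > d. *)
Definition zget (d : nat) (z : 'rV[R]_d) (j : nat) : R :=
  if j == 0%N then 1 else
  match (insub j.-1 : option 'I_d) with Some k => z 0 k | None => 0 end.

Definition inDelta (d : nat) (z : 'rV[R]_d) : Prop :=
  forall j : nat, (j <= d)%N -> zget z j.+1 <= zget z j.

Definition inB (d : nat) (p : nat -> R) (x : R) (z : 'rV[R]_d) : Prop :=
  x = p 0%N + \sum_(j < d) (p j.+1 - p j) * z 0 j /\ inDelta z.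

Definition Tmap (d : nat) (z : 'rV[R]_d) : 'rV[R]_d.+1 :=
  \row_(j < d.+1) (zget z j - zget z j.+1).

Definition Tinv (d : nat) (l : 'rV[R]_d.+1) : 'rV[R]_d :=
  \row_(j < d) \sum_(k < d.+1 | (j.+1 <= k)%N) l 0 k.

Definition Pmx (d : nat) (rho : 'S_d.+1) : 'M[R]_d.+1 :=
  \matrix_(j < d.+1, k < d.+1) (j == rho k)%:R.

(* L^rho = T^{-1} o P^rho o T  (vectors stored as rows: P lambda = lambda *m P^T) *)
Definition Lmap (d : nat) (rho : 'S_d.+1) (z : 'rV[R]_d) : 'rV[R]_d :=
  Tinv (Tmap z *m (Pmx rho)^T).

Definition Linv (d : nat) (rho : 'S_d.+1) (z : 'rV[R]_d) : 'rV[R]_d :=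
  Tinv (Tmap z *m (invmx (Pmx rho))^T).

(* Staircases for n = 2: sequences pi = [pi_1(1); ...; pi_N(1)] with entries
   in {1,2}, value i occurring exactly d_i times. *)
Definition staircase (d1 d2 : nat) (pi : seq nat) : Prop :=
  all (fun i => (i == 1%N) || (i == 2%N)) pi /\
  count_mem 1%N pi = d1 /\ count_mem 2%N pi = d2.

Definition jpt (pi : seq nat) (t : nat) : nat * nat :=
  (count_mem 1%N (take t pi), count_mem 2%N (take t pi)).

Definition zpi (d1 d2 : nat) (z1 : 'rV[R]_d1) (z2 : 'rV[R]_d2)
    (pi : seq nat) (t : nat) : R :=
  let i := nth 0%N pi t.-1 in
  let k := count_mem i (take t pi) in
  if i == 1%N then zget z1 k else zget z2 k.

Definition psi (d1 d2 : nat) (p1 p2 : nat -> R) (f1 f2 : R -> R)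
    (rho1 : 'S_d1.+1) (rho2 : 'S_d2.+1) (j : nat * nat) : R :=
  f1 (p1 (rho1 (inord j.1))) * f2 (p2 (rho2 (inord j.2))).

Definition stair_bound (d1 d2 : nat) (ps : nat * nat -> R)
    (z1 : 'rV[R]_d1) (z2 : 'rV[R]_d2) (pi : seq nat) : R :=
  ps (jpt pi 0) +
  \sum_(1 <= t < (d1 + d2).+1) (ps (jpt pi t) - ps (jpt pi t.-1)) * zpi z1 z2 pi t.

Definition pt (d1 d2 : nat) : Type := (R * R * 'rV[R]_d1 * 'rV[R]_d2 * R)%type.

Definition mixpt (d1 d2 : nat) (t : R) (a b : pt d1 d2) : pt d1 d2 :=
  let: (a1, a2, a3, a4, a5) := a in
  let: (b1, b2, b3, b4, b5) := b in
  (t * a1 + (1 - t) * b1, t * a2 + (1 - t) * b2,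
   t *: a3 + (1 - t) *: b3, t *: a4 + (1 - t) *: b4, t * a5 + (1 - t) * b5).

Definition vertex (d1 d2 : nat) (Q : pt d1 d2 -> Prop) (v : pt d1 d2) : Prop :=
  Q v /\ forall (a b : pt d1 d2) (t : R), Q a -> Q b -> 0 < t < 1 ->
    v = mixpt t a b -> a = b.

Definition binary (d : nat) (z : 'rV[R]_d) : Prop :=
  forall j : 'I_d, z 0 j = 0 \/ z 0 j = 1.

Definition relax (d1 d2 : nat) (p1 p2 : nat -> R) (f1 f2 : R -> R)
    (s1 : 'S_d1.+1) (s2 : 'S_d2.+1) (t1 : 'S_d1.+1) (t2 : 'S_d2.+1)
    (v : pt d1 d2) : Prop :=
  let: (x1, x2, z1, z2, mu) := v in
  inB p1 x1 z1 /\ inB p2 x2 z2 /\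
  let z1' := Linv s1 z1 in let z2' := Linv s2 z2 in
  let z1'' := Linv t1 z1 in let z2'' := Linv t2 z2 in
  forall pi : seq nat, staircase d1 d2 pi ->
    mu <= stair_bound (psi p1 p2 f1 f2 s1 s2) z1' z2' pi /\
    stair_bound (psi p1 p2 f1 f2 t1 t2) z1'' z2'' pi <= mu.

End Defs.

From HB Require Import structures.
From mathcomp Require Import all_boot all_order all_algebra all_fingroup.
From mathcomp Require Import reals zify ring lra.
Import Order.TTheory GRing.Theory Num.Theory.
Local Open Scope ring_scope.
Set Implicit Arguments. Unset Strict Implicit. Unset Printing Implicit Defensive.

(* The LP relaxation is the convex hull of the grid points
   (p_1k1, p_2k2, unary code of k1, unary code of k2, f1(p_1k1) f2(p_2k2)),
   whose z-parts are binary.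

   A grid point satisfies every staircase inequality: in the coordinates
   z' = (L^sigma)^-1 z its code is again a unary code, along which the staircase
   sum telescopes, and the upper bound then reduces to the supermodularity of
   (j1, j2) |-> psi^sigma(j), a product of two nondecreasing sequences; the lower
   bound is the same statement for -psi^tau.

   Conversely, fix (x, z) and merge the nonincreasing sequences z'_1, z'_2
   greedily into one staircase.  Along it, the upper bound is the mu-coordinate
   of a convex combination of grid points with the given (x, z): peel off the
   first step, with weight its coordinate u, and recurse on the coordinates
   rescaled by 1/u.  The same holds for the lower bound with tau, so every
   feasible mu, lying between the two, is in the hull as well.

   Hence vertices of the relaxation are grid points.  Finally, a feasible
   binary point has unary codes, and the staircase through the corner of those
   codes pins mu to f1(x1) f2(x2). *)

Section ZCoordinates.
Variable R : realType.

Lemma zget0 d (z : 'rV[R]_d) : zget z 0 = 1.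
Proof. by []. Qed.

Lemma zgetS d (z : 'rV[R]_d) (j : 'I_d) : zget z j.+1 = z 0 j.
Proof.
by rewrite /zget /= (insubT (fun k => k < d)%N (ltn_ord j)) /=; congr (z _ _); apply: val_inj.
Qed.

Lemma zget_gt d (z : 'rV[R]_d) j : (d < j)%N -> zget z j = 0.
Proof. by case: j => // j; rewrite ltnS => hj; rewrite /zget /= insubF // ltnNge hj. Qed.

Lemma zget_comb d (t : R) (a b : 'rV[R]_d) j :
  zget (t *: a + (1 - t) *: b) j = t * zget a j + (1 - t) * zget b j.
Proof.
rewrite /zget; case: eqP => _; first by rewrite !mulr1 addrC subrK.
by case: insub => [k|]; rewrite ?mxE ?mulr0 ?addr0.
Qed.

Lemma homo_ler_upto (a : nat -> R) d : (forall i, (i < d)%N -> a i <= a i.+1) ->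
  forall i j, (i <= j)%N -> (j <= d)%N -> a i <= a j.
Proof.
move=> ha i; elim=> [|j IH] hij hjd; first by rewrite leqn0 in hij; rewrite (eqP hij).
rewrite leq_eqVlt in hij; case/orP: hij => [/eqP -> //|hij].
exact: le_trans (IH hij (ltnW hjd)) (ha _ hjd).
Qed.

Definition zdiff d (z : 'rV[R]_d) (m : nat) : R := zget z m - zget z m.+1.

Lemma sum_zdiff d (z : 'rV[R]_d) : \sum_(k < d.+1) zdiff z k = 1.
Proof.
rewrite -(big_mkord xpredT (zdiff z)) (telescope_sumr_eq (fun k => - zget z k)) //.
  by rewrite zget_gt // oppr0 opprK zget0 add0r.
by move=> k _; rewrite /zdiff opprK addrC.
Qed.

Lemma zdiff_ge0 d (z : 'rV[R]_d) m : inDelta z -> 0 <= zdiff z m.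
Proof.
move=> hz; rewrite /zdiff subr_ge0; case: (leqP m d) => hm; first exact: hz.
by rewrite !zget_gt // ltnW.
Qed.

Lemma zdiff_comb d (t : R) (a b : 'rV[R]_d) m :
  zdiff (t *: a + (1 - t) *: b) m = t * zdiff a m + (1 - t) * zdiff b m.
Proof. by rewrite /zdiff !zget_comb; ring. Qed.

Lemma invmx_Pmx d (rho : 'S_d.+1) : invmx (Pmx R rho) = (Pmx R rho)^T.
Proof.
have PPt : Pmx R rho *m (Pmx R rho)^T = 1%:M.
  apply/matrixP => i j; rewrite !mxE (bigD1 (rho^-1 i)%g) //= big1.
    by rewrite !mxE permKV eqxx mul1r addr0 eq_sym; case: eqVneq.
  move=> k hk; rewrite !mxE; case: eqVneq => [ik|]; last by rewrite mul0r.
  by rewrite ik permK eqxx in hk.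
have [Punit _] := mulmx1_unit PPt.
by rewrite -[LHS]mulmx1 -PPt mulKmx.
Qed.

Lemma zget_Linv d (rho : 'S_d.+1) (z : 'rV[R]_d) l :
  zget (Linv rho z) l = \sum_(k < d.+1 | (l <= k)%N) zdiff z (rho k).
Proof.
case: l => [|l].
  by rewrite zget0 -(sum_zdiff z) (reindex_inj (@perm_inj _ rho)).
case: (ltnP l d) => hl; last first.
  rewrite zget_gt ?ltnS // big_pred0 // => k.
  by apply/negbTE; rewrite -ltnNge ltnS (leq_trans _ hl) // -ltnS.
rewrite (zgetS _ (Ordinal hl)) /Linv /Tinv mxE; apply: eq_bigr => k _.
rewrite invmx_Pmx trmxK mxE (bigD1 (rho k)) //= big1 ?addr0.
  by rewrite !mxE eqxx mulr1.
by move=> m hm; rewrite !mxE (negbTE hm) mulr0.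
Qed.

Lemma zget_Linv_ge0 d (rho : 'S_d.+1) (z : 'rV[R]_d) l :
  inDelta z -> 0 <= zget (Linv rho z) l.
Proof. by move=> hz; rewrite zget_Linv sumr_ge0 // => k _; apply: zdiff_ge0. Qed.

Lemma zget_Linv_nonincr d (rho : 'S_d.+1) (z : 'rV[R]_d) l : inDelta z ->
  zget (Linv rho z) l.+1 <= zget (Linv rho z) l.
Proof.
move=> hz; rewrite !zget_Linv [leLHS]big_mkcond [leRHS]big_mkcond.
apply: ler_sum => k _; case: ifP => h; first by rewrite (ltnW h).
by case: ifP => _ //; apply: zdiff_ge0.
Qed.

Lemma zget_Linv_comb d (rho : 'S_d.+1) (t : R) (a b : 'rV[R]_d) :
  zget (Linv rho (t *: a + (1 - t) *: b)) =
  (fun l => t * zget (Linv rho a) l + (1 - t) * zget (Linv rho b) l).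
Proof.
apply: boolp.funext => l; rewrite !zget_Linv !mulr_sumr -big_split /=.
by apply: eq_bigr => k _; rewrite zdiff_comb.
Qed.

End ZCoordinates.

Section UnaryCodes.
Variable R : realType.

(** [Lseq rho c] is [L^rho] applied to [(c 1, ..., c d)], provided [c] follows the
    conventions [c 0 = 1] and [c d.+1 = 0] of [zget]. *)
Definition Lseq d (rho : 'S_d.+1) (c : nat -> R) : 'rV[R]_d :=
  \row_(j < d) \sum_(k < d.+1 | (j.+1 <= k)%N) (c (rho^-1 k)%g - c (rho^-1 k)%g.+1).

Definition unary (m l : nat) : R := (l <= m)%N%:R.

Definition unary_row d (k : nat) : 'rV[R]_d := \row_(j < d) (j < k)%N%:R.

Definition xcoord (p : nat -> R) d (z : 'rV[R]_d) : R :=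
  p 0%N + \sum_(j < d) (p j.+1 - p j) * z 0 j.

Lemma sum_indicator_eq n (P : pred 'I_n) (k0 : 'I_n) :
  \sum_(k < n | P k) (k == k0)%:R = (P k0)%:R :> R.
Proof.
rewrite big_mkcond (bigD1 k0) //= eqxx big1 ?addr0; first by case: (P k0).
by move=> k hk; rewrite (negbTE hk); case: (P k).
Qed.

Lemma Lseq_Linv d (rho : 'S_d.+1) (z : 'rV[R]_d) : Lseq rho (zget (Linv rho z)) = z.
Proof.
apply/matrixP => i j; rewrite mxE (ord1 i).
transitivity (\sum_(k < d.+1 | (j.+1 <= k)%N) zdiff z k).
  apply: eq_bigr => k _; rewrite !zget_Linv (bigD1 (rho^-1 k)%g) //= permKV.
  rewrite [X in _ + X - _](eq_bigl (fun m : 'I_d.+1 => ((rho^-1 k)%g < m)%N)) ?addrK // => m.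
  by rewrite andbC ltn_neqAle eq_sym.
transitivity (\sum_(j.+1 <= k < d.+1) zdiff z k); first by rewrite big_geq_mkord.
rewrite (telescope_sumr_eq (fun k => - zget z k)) //.
- by rewrite zget_gt // oppr0 opprK add0r zgetS.
- exact: leqW.
- by move=> k _; rewrite /zdiff opprK addrC.
Qed.

Lemma zget_unary_row d k l : (k <= d)%N -> zget (unary_row d k) l = unary k l.
Proof.
move=> hk; case: l => [|l]; first by rewrite zget0.
case: (ltnP l d) => hl; first by rewrite (zgetS _ (Ordinal hl)) mxE.
rewrite zget_gt ?ltnS // /unary; suff -> : (l.+1 <= k)%N = false by [].
by apply/negbTE; rewrite -ltnNge ltnS (leq_trans hk).
Qed.

Lemma perm_inordK d (rho : 'S_d.+1) k : (k <= d)%N ->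
  rho (inord ((rho^-1)%g (inord k))) = k :> nat.
Proof. by move=> hk; rewrite inord_val permKV inordK. Qed.

Lemma Lseq_unary d (rho : 'S_d.+1) m : (m <= d)%N ->
  Lseq rho (unary m) = unary_row d (rho (inord m)).
Proof.
move=> hm; apply/matrixP => i j; rewrite !mxE.
rewrite -(sum_indicator_eq (fun k : 'I_d.+1 => j < k)%N); apply: eq_bigr => k _.
have -> : (k == rho (inord m)) = ((rho^-1)%g k == m :> nat).
  apply/eqP/eqP => [->|h]; first by rewrite permK inordK.
  by rewrite -[k](permKV rho); congr (rho _); apply: val_inj; rewrite /= h inordK.
by rewrite /unary; case: ltngtP; rewrite ?subrr ?subr0.
Qed.

Lemma zget_Linv_unary_row d (rho : 'S_d.+1) k : (k <= d)%N ->
  zget (Linv rho (unary_row d k)) = unary ((rho^-1)%g (inord k)).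
Proof.
move=> hk; apply: boolp.funext => l.
rewrite zget_Linv {1}/unary -(sum_indicator_eq (fun k' : 'I_d.+1 => l <= k')%N).
apply: eq_bigr => k' _; rewrite /zdiff !zget_unary_row //.
have -> : (k' == (rho^-1)%g (inord k)) = (rho k' == k :> nat).
  apply/eqP/eqP => [->|h]; first by rewrite permKV inordK.
  by rewrite -[k'](permK rho); congr (_ _); apply: val_inj; rewrite /= h inordK.
by rewrite /unary; case: ltngtP; rewrite ?subrr ?subr0.
Qed.

Lemma Lseq_comb d (rho : 'S_d.+1) (t : R) (c c' : nat -> R) :
  Lseq rho (fun l => t * c l + (1 - t) * c' l) = t *: Lseq rho c + (1 - t) *: Lseq rho c'.
Proof.
apply/matrixP => i j; rewrite !mxE !mulr_sumr -big_split /=.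
by apply: eq_bigr => k _; ring.
Qed.

Lemma xcoord_unary_row (p : nat -> R) d k : (k <= d)%N -> xcoord p (unary_row d k) = p k.
Proof.
move=> hk; rewrite /xcoord.
transitivity (p 0%N + \sum_(0 <= j < k) (p j.+1 - p j)).
  congr (_ + _); rewrite (big_nat_widen _ _ _ _ _ hk) big_mkord big_mkcond [RHS]big_mkcond /=.
  by apply: eq_bigr => j _; rewrite mxE; case: (j < k)%N; rewrite ?mulr1 ?mulr0.
by rewrite (telescope_sumr p (leq0n k)) addrC subrK.
Qed.

Lemma xcoord_comb (p : nat -> R) d (t : R) (z z' : 'rV[R]_d) :
  xcoord p (t *: z + (1 - t) *: z') = t * xcoord p z + (1 - t) * xcoord p z'.
Proof.
rewrite /xcoord !mulrDr !mulr_sumr addrACA -big_split /=.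
by congr (_ + _); [ring | apply: eq_bigr => j _; rewrite !mxE; ring].
Qed.

Lemma inB_unary_row (p : nat -> R) d k : (k <= d)%N -> inB p (p k) (unary_row d k).
Proof.
move=> hk; split; first by rewrite -(xcoord_unary_row p hk).
by move=> j _; rewrite !zget_unary_row // ler_nat; case: leqP => // /ltnW ->.
Qed.

Lemma inB_comb d (p : nat -> R) (t : R) x x' (z z' : 'rV[R]_d) : 0 <= t <= 1 ->
  inB p x z -> inB p x' z' -> inB p (t * x + (1 - t) * x') (t *: z + (1 - t) *: z').
Proof.
case/andP=> ht0 ht1 [-> hz] [-> hz']; split; first by rewrite -!/(xcoord _ _) xcoord_comb.
move=> j hj; rewrite !zget_comb; apply: lerD; apply: ler_wpM2l; rewrite ?subr_ge0 //.
- exact: hz.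
- exact: hz'.
Qed.

Lemma binary_unary_row d k : binary (unary_row d k : 'rV[R]_d).
Proof. by move=> j; rewrite mxE; case: (j < k)%N; [right | left]. Qed.

Lemma binary_inDelta_unary d (z : 'rV[R]_d) : binary z -> inDelta z ->
  exists2 k, (k <= d)%N & z = unary_row d k.
Proof.
move=> hb hd.
have zd0 : exists j, zget z j.+1 == 0 by exists d; rewrite zget_gt.
have [k /eqP zk0 kmin] := ex_minnP zd0.
have kd : (k <= d)%N by apply: kmin; rewrite zget_gt.
exists k => //; apply/matrixP => i j; rewrite (ord1 i) mxE -zgetS.
case: (ltnP j k) => h.
  have : zget z j.+1 != 0 by apply/negP => /kmin; rewrite leqNgt h.
  by rewrite zgetS; case: (hb j) => -> //; rewrite eqxx.
have : zget z j.+1 <= 0.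
  rewrite -zk0 -lerN2; apply: (@homo_ler_upto R (fun n => - zget z n) d.+1) => //.
  - by move=> n hn; rewrite lerN2; apply: hd.
  - by rewrite ltnS ltnW.
by rewrite zgetS; case: (hb j) => -> //; rewrite ler10.
Qed.

End UnaryCodes.

Section StaircaseSums.
Variable R : realType.
Implicit Types (ps : nat * nat -> R) (c : nat -> R) (s : nat * nat) (pi : seq nat).

Definition stair_step (i : nat) (s : nat * nat) : nat * nat :=
  ((s.1 + (i == 1%N))%N, (s.2 + (i == 2%N))%N).

Definition stair_coord c1 c2 (i : nat) s : R := if i == 1%N then c1 s.1 else c2 s.2.

Lemma stair_coordZ c1 c2 (k : R) i s :
  stair_coord (fun l => k * c1 l) (fun l => k * c2 l) i s = k * stair_coord c1 c2 i s.
Proof. by rewrite /stair_coord; case: ifP. Qed.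

Fixpoint stair_sum ps c1 c2 s pi : R :=
  if pi is i :: pi' then
    (ps (stair_step i s) - ps s) * stair_coord c1 c2 i (stair_step i s)
    + stair_sum ps c1 c2 (stair_step i s) pi'
  else 0.

Definition all12 pi := all (fun i => (i == 1%N) || (i == 2%N)) pi.

(** The sum of [stair_bound] with the point representation shifted by [s]: the
    shift is what makes the induction on [pi] go through. *)
Lemma stair_sum_shift ps c1 c2 pi s : all12 pi ->
  \sum_(1 <= t < (size pi).+1)
     (ps ((s.1 + (jpt pi t).1)%N, (s.2 + (jpt pi t).2)%N)
      - ps ((s.1 + (jpt pi t.-1).1)%N, (s.2 + (jpt pi t.-1).2)%N)) *
     (if nth 0%N pi t.-1 == 1%N then c1 (s.1 + count_mem (nth 0%N pi t.-1) (take t pi))%N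
      else c2 (s.2 + count_mem (nth 0%N pi t.-1) (take t pi))%N)
  = stair_sum ps c1 c2 s pi.
Proof.
elim: pi s => [|i pi IH] [s1 s2] /=; first by rewrite big_geq.
case/andP=> hi hall; rewrite big_nat_recl // -(IH _ hall).
have -> : stair_step i (s1, s2) = ((s1 + (i == 1%N))%N, (s2 + (i == 2%N))%N) by [].
congr (_ + _); first by case/orP: hi => /eqP -> /=; rewrite /stair_coord /jpt /= take0 /= ?addn0.
apply: eq_big_nat => -[|t] // /andP[_ ht].
have := allP hall (nth 0%N pi t) (mem_nth _ ht).
by rewrite /jpt /=; case/orP: hi => /eqP ->; case/orP => /eqP -> /=; rewrite ?addnA ?addn0 ?addn1.
Qed.

Lemma size_all12 pi : all12 pi -> size pi = (count_mem 1%N pi + count_mem 2%N pi)%N.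
Proof. by elim: pi => //= i pi IH /andP[/orP[] /eqP -> /IH ->] /=; lia. Qed.

Lemma stair_boundE d1 d2 ps (z1 : 'rV[R]_d1) (z2 : 'rV[R]_d2) pi :
  staircase d1 d2 pi ->
  stair_bound ps z1 z2 pi = ps (0%N, 0%N) + stair_sum ps (zget z1) (zget z2) (0%N, 0%N) pi.
Proof.
case=> hall [h1 h2]; rewrite /stair_bound /jpt take0 /=; congr (_ + _).
rewrite -(stair_sum_shift _ _ _ _ hall) size_all12 // h1 h2.
by apply: eq_bigr => t _; rewrite /zpi /= !add0n.
Qed.

Lemma stair_sumZ ps c1 c2 (k : R) s pi :
  stair_sum ps (fun l => k * c1 l) (fun l => k * c2 l) s pi = k * stair_sum ps c1 c2 s pi.
Proof.
elim: pi s => [|i pi IH] s /=; first by rewrite mulr0.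
by rewrite IH stair_coordZ mulrDr mulrCA.
Qed.

Lemma stair_sum_comb ps c1 c2 c1' c2' (t : R) s pi :
  stair_sum ps (fun l => t * c1 l + (1 - t) * c1' l) (fun l => t * c2 l + (1 - t) * c2' l) s pi
  = t * stair_sum ps c1 c2 s pi + (1 - t) * stair_sum ps c1' c2' s pi.
Proof.
elim: pi s => [|i pi IH] s /=; first by rewrite !mulr0 addr0.
by rewrite IH /stair_coord; case: ifP => _; ring.
Qed.

Lemma stair_sumN ps ps' c1 c2 s pi : (forall j, ps' j = - ps j) ->
  stair_sum ps' c1 c2 s pi = - stair_sum ps c1 c2 s pi.
Proof.
move=> ps'E; elim: pi s => [|i pi IH] s /=; first by rewrite oppr0.
by rewrite IH !ps'E; ring.
Qed.

Lemma unary_clip_step (a b : nat -> R) m1 m2 d1 d2 i s :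
  (forall k, (k < d1)%N -> a k <= a k.+1) -> (forall k, (k < d2)%N -> b k <= b k.+1) ->
  (i == 1%N) || (i == 2%N) ->
  ((stair_step i s).1 <= d1)%N -> ((stair_step i s).2 <= d2)%N ->
  a (minn (stair_step i s).1 m1) * b (minn (stair_step i s).2 m2) <=
  a (minn s.1 m1) * b (minn s.2 m2) +
  (a (stair_step i s).1 * b (stair_step i s).2 - a s.1 * b s.2) *
  stair_coord (unary R m1) (unary R m2) i (stair_step i s).
Proof.
move=> ha hb; case: s => s1 s2.
case/orP => /eqP -> /=; rewrite /stair_coord /unary /= ?addn0 ?addn1 => h1 h2.
- case: (ltnP s1 m1) => hs; last first.
    by rewrite (minn_idPr (leqW hs)) mulr0 addr0.
  rewrite (minn_idPl hs) mulr1.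
  have : 0 <= a s1.+1 - a s1 by rewrite subr_ge0 ha.
  have : b (minn s2 m2) <= b s2 by apply: (homo_ler_upto hb) => //; exact: geq_minl.
  nra.
- case: (ltnP s2 m2) => hs; last first.
    by rewrite (minn_idPr (leqW hs)) mulr0 addr0.
  rewrite (minn_idPl hs) mulr1.
  have : 0 <= b s2.+1 - b s2 by rewrite subr_ge0 hb.
  have : a (minn s1 m1) <= a s1 by apply: (homo_ler_upto ha) => //; exact: geq_minl.
  nra.
Qed.

Lemma stair_sum_unary_ge (a b : nat -> R) m1 m2 d1 d2 pi s :
  (forall k, (k < d1)%N -> a k <= a k.+1) -> (forall k, (k < d2)%N -> b k <= b k.+1) ->
  all12 pi -> (s.1 + count_mem 1%N pi <= d1)%N -> (s.2 + count_mem 2%N pi <= d2)%N ->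
  a (minn (s.1 + count_mem 1%N pi) m1) * b (minn (s.2 + count_mem 2%N pi) m2) <=
  a (minn s.1 m1) * b (minn s.2 m2) +
  stair_sum (fun j => a j.1 * b j.2) (unary R m1) (unary R m2) s pi.
Proof.
move=> ha hb; elim: pi s => [|i pi IH] s /=; first by rewrite !addn0 addr0.
case/andP=> hi hall; rewrite !addnA => h1 h2.
apply: le_trans (IH (stair_step i s) hall h1 h2) _; rewrite addrA lerD2r.
apply: (unary_clip_step _ _ ha hb hi).
- exact: leq_trans (leq_addr _ _) h1.
- exact: leq_trans (leq_addr _ _) h2.
Qed.

Lemma staircase_unary_ge (a b : nat -> R) d1 d2 m1 m2 pi :
  (forall k, (k < d1)%N -> a k <= a k.+1) -> (forall k, (k < d2)%N -> b k <= b k.+1) ->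
  staircase d1 d2 pi -> (m1 <= d1)%N -> (m2 <= d2)%N ->
  a m1 * b m2 <=
  a 0%N * b 0%N + stair_sum (fun j => a j.1 * b j.2) (unary R m1) (unary R m2) (0%N, 0%N) pi.
Proof.
move=> ha hb [hall [h1 h2]] hm1 hm2.
have := stair_sum_unary_ge m1 m2 (s := (0%N, 0%N)) ha hb hall.
by rewrite /= !add0n h1 h2 (minn_idPr hm1) (minn_idPr hm2) !min0n; apply.
Qed.

End StaircaseSums.

Section SortedStaircases.
Variable R : realType.
Implicit Types (ps : nat * nat -> R) (c : nat -> R) (s : nat * nat) (pi : seq nat).

Fixpoint stair_sorted c1 c2 s pi (a : R) : Prop :=
  if pi is i :: pi' then
    stair_coord c1 c2 i (stair_step i s) <= a /\
    stair_sorted c1 c2 (stair_step i s) pi' (stair_coord c1 c2 i (stair_step i s))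
  else True.

Lemma stair_sortedZ c1 c2 (k : R) s pi a : 0 < k ->
  stair_sorted c1 c2 s pi a ->
  stair_sorted (fun l => k^-1 * c1 l) (fun l => k^-1 * c2 l) s pi (k^-1 * a).
Proof.
move=> hk; elim: pi s a => [|i pi IH] s a //= [hle hs].
by rewrite stair_coordZ; split; [rewrite ler_pM2l ?invr_gt0 | exact: IH].
Qed.

Lemma stair_sum_sorted0 ps c1 c2 pi s :
  (forall l, 0 <= c1 l) -> (forall l, 0 <= c2 l) -> all12 pi ->
  stair_sorted c1 c2 s pi 0 ->
  (forall l, (s.1 + count_mem 1%N pi < l)%N -> c1 l = 0) ->
  (forall l, (s.2 + count_mem 2%N pi < l)%N -> c2 l = 0) ->
  [/\ forall l, (s.1 < l)%N -> c1 l = 0, forall l, (s.2 < l)%N -> c2 l = 0 &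
      stair_sum ps c1 c2 s pi = 0].
Proof.
move=> c1_ge0 c2_ge0; elim: pi s => [|i pi IH] [s1 s2] /=.
  by move=> _ _; rewrite !addn0 => z1 z2; split.
case/andP=> hi hall [hle hs].
have u0 : stair_coord c1 c2 i (stair_step i (s1, s2)) = 0.
  by apply/eqP; rewrite eq_le hle /stair_coord; case: ifP => _; [apply: c1_ge0 | apply: c2_ge0].
rewrite u0 mulr0 add0r; rewrite u0 in hs.
case/orP: hi => /eqP ei; subst i; rewrite /stair_coord /= in u0 * => z1 z2.
- have [Z1 Z2 ->] := IH _ hall hs ltac:(move=> l hl; apply: z1; simpl in *; lia)
                                  ltac:(move=> l hl; apply: z2; simpl in *; lia).
  split=> // l hl; last by apply: Z2; simpl; lia.
  by case: (ltngtP l (s1 + 1)%N) => [|/Z1|->] //; lia.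
- have [Z1 Z2 ->] := IH _ hall hs ltac:(move=> l hl; apply: z1; simpl in *; lia)
                                  ltac:(move=> l hl; apply: z2; simpl in *; lia).
  split=> // l hl; first by apply: Z1; simpl; lia.
  by case: (ltngtP l (s2 + 1)%N) => [|/Z2|->] //; lia.
Qed.

Fixpoint merge_stair c1 c2 (d1 d2 n : nat) s : seq nat :=
  if n is n'.+1 then
    if (s.1 < d1)%N && ((d2 <= s.2)%N || (c2 s.2.+1 <= c1 s.1.+1))
    then 1%N :: merge_stair c1 c2 d1 d2 n' (stair_step 1 s)
    else 2%N :: merge_stair c1 c2 d1 d2 n' (stair_step 2 s)
  else [::].

Lemma merge_stair_sorted c1 c2 d1 d2 :
  (forall l, 0 <= c1 l) -> (forall l, 0 <= c2 l) ->
  (forall l, c1 l.+1 <= c1 l) -> (forall l, c2 l.+1 <= c2 l) ->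
  (forall l, (d1 < l)%N -> c1 l = 0) -> (forall l, (d2 < l)%N -> c2 l = 0) ->
  forall n s a, c1 s.1.+1 <= a -> c2 s.2.+1 <= a ->
  stair_sorted c1 c2 s (merge_stair c1 c2 d1 d2 n s) a.
Proof.
move=> c1_ge0 c2_ge0 c1_dec c2_dec c1_0 c2_0.
elim=> [|n IH] [s1 s2] a //= ha1 ha2.
case: ifP => hc /=; rewrite /stair_coord /stair_step /= ?addn0 ?addn1.
- split=> //; apply: IH => //=.
  case/andP: hc => _ /orP [hd|//].
  by rewrite c2_0 ?c1_ge0 // ltnS.
- split=> //; apply: IH => //=.
  move/negbT: hc; rewrite negb_and negb_or -ltnNge -ltNge.
  case/orP => [hd|/andP [_ /ltW //]].
  by rewrite c1_0 ?c2_ge0 // ltnS leqNgt.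
Qed.

Lemma merge_stair_count c1 c2 d1 d2 n s :
  (s.1 <= d1)%N -> (s.2 <= d2)%N -> n = ((d1 - s.1) + (d2 - s.2))%N ->
  [/\ all12 (merge_stair c1 c2 d1 d2 n s),
      count_mem 1%N (merge_stair c1 c2 d1 d2 n s) = (d1 - s.1)%N &
      count_mem 2%N (merge_stair c1 c2 d1 d2 n s) = (d2 - s.2)%N].
Proof.
elim: n s => [|n IH] [s1 s2] /= h1 h2 hn; first by split=> //; lia.
case: ifP => hc /=; rewrite /stair_step /= ?addn0 ?addn1.
- case/andP: hc => hc _.
  have [hall c1E c2E] := IH (s1.+1, s2) hc h2 ltac:(simpl; lia).
  by split=> //=; rewrite ?c1E ?c2E /=; lia.
- have hs2 : (s2 < d2)%N.
    by move/negbT: hc; rewrite negb_and negb_or -ltnNge; case/orP => [|/andP[]]; lia.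
  have [hall c1E c2E] := IH (s1, s2.+1) h1 hs2 ltac:(simpl; lia).
  by split=> //=; rewrite ?c1E ?c2E /=; lia.
Qed.

Lemma stair_sum_unary_past ps m1 m2 pi s :
  all12 pi -> (m1 <= s.1)%N -> (m2 <= s.2)%N ->
  stair_sum ps (unary R m1) (unary R m2) s pi = 0.
Proof.
elim: pi s => [|i pi IH] [s1 s2] //= /andP [hi hall] h1 h2.
case/orP: hi => /eqP ->; rewrite /stair_step /stair_coord /unary /= ?addn0 ?addn1.
- by rewrite IH //= ?ltnNge ?(leq_trans h1) // mulr0 add0r.
- by rewrite IH //= ?ltnNge ?(leq_trans h2) // mulr0 add0r.
Qed.

Lemma stair_sum_nseq1 ps m1 c2 n pi s : (s.1 + n <= m1)%N ->
  stair_sum ps (unary R m1) c2 s (nseq n 1%N ++ pi) =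
  ps ((s.1 + n)%N, s.2) - ps s + stair_sum ps (unary R m1) c2 ((s.1 + n)%N, s.2) pi.
Proof.
elim: n s => [|n IH] [s1 s2] /= h; first by rewrite addn0 subrr add0r.
rewrite IH /stair_step /stair_coord /unary /= ?addn0 ?addn1; last by simpl; lia.
have -> : (s1.+1 <= m1)%N by lia.
by rewrite mulr1 addSnnS addrA; congr (_ + _); ring.
Qed.

Lemma stair_sum_nseq2 ps c1 m2 n pi s : (s.2 + n <= m2)%N ->
  stair_sum ps c1 (unary R m2) s (nseq n 2%N ++ pi) =
  ps (s.1, (s.2 + n)%N) - ps s + stair_sum ps c1 (unary R m2) (s.1, (s.2 + n)%N) pi.
Proof.
elim: n s => [|n IH] [s1 s2] /= h; first by rewrite addn0 subrr add0r.
rewrite IH /stair_step /stair_coord /unary /= ?addn0 ?addn1; last by simpl; lia.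
have -> : (s2.+1 <= m2)%N by lia.
by rewrite mulr1 addSnnS addrA; congr (_ + _); ring.
Qed.

Definition corner_stair d1 d2 m1 m2 :=
  nseq m1 1%N ++ nseq m2 2%N ++ nseq (d1 - m1) 1%N ++ nseq (d2 - m2) 2%N.

Lemma corner_staircase d1 d2 m1 m2 : (m1 <= d1)%N -> (m2 <= d2)%N ->
  staircase d1 d2 (corner_stair d1 d2 m1 m2).
Proof.
move=> h1 h2; rewrite /staircase /corner_stair !all_cat !count_cat !all_nseq !count_nseq /=.
by split; [rewrite !orbT | split; lia].
Qed.

Lemma stair_sum_corner ps d1 d2 m1 m2 :
  ps (0%N, 0%N) + stair_sum ps (unary R m1) (unary R m2) (0%N, 0%N) (corner_stair d1 d2 m1 m2)
  = ps (m1, m2).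
Proof.
rewrite /corner_stair stair_sum_nseq1 //= stair_sum_nseq2 //= !add0n.
rewrite stair_sum_unary_past //= ?addr0; first by ring.
by rewrite /all12 all_cat !all_nseq !orbT.
Qed.

End SortedStaircases.

Section ConvexHull.
Variables (R : realType) (d1 d2 : nat).
Implicit Types (S Q : pt R d1 d2 -> Prop) (a b v : pt R d1 d2).

Inductive conv S : pt R d1 d2 -> Prop :=
  | conv_base v : S v -> conv S v
  | conv_comb (t : R) a b : 0 <= t <= 1 -> conv S a -> conv S b -> conv S (mixpt t a b).

Definition convex Q := forall (t : R) a b, 0 <= t <= 1 -> Q a -> Q b -> Q (mixpt t a b).

Lemma mixpt0 a b : mixpt 0 a b = b.
Proof.
case: a => [[[[a1 a2] a3] a4] a5]; case: b => [[[[b1 b2] b3] b4] b5].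
by rewrite /mixpt !mul0r !scale0r !add0r subr0 !mul1r !scale1r.
Qed.

Lemma mixpt1 a b : mixpt 1 a b = a.
Proof.
case: a => [[[[a1 a2] a3] a4] a5]; case: b => [[[[b1 b2] b3] b4] b5].
by rewrite /mixpt subrr !mul0r !scale0r !addr0 !mul1r !scale1r.
Qed.

Lemma mixptxx (t : R) a : mixpt t a a = a.
Proof.
case: a => [[[[a1 a2] a3] a4] a5].
by rewrite /mixpt -!mulrDl -!scalerDl addrC subrK !mul1r !scale1r.
Qed.

Lemma conv_sub S Q : convex Q -> (forall v, S v -> Q v) -> forall v, conv S v -> Q v.
Proof.
move=> cQ SQ v; elim=> [w Sw | t a b ht _ Qa _ Qb]; [exact: SQ | exact: cQ ht Qa Qb].
Qed.

Lemma vertex_conv S Q v : convex Q -> (forall w, S w -> Q w) ->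
  conv S v -> vertex Q v -> S v.
Proof.
move=> cQ SQ; elim=> [w Sw _ | t a b ht ha IHa hb IHb [Qv hv]]; first by [].
have [Qa Qb] := (conv_sub cQ SQ ha, conv_sub cQ SQ hb).
have [t0|t0] := eqVneq t 0; first by subst t; rewrite mixpt0 in Qv hv *; apply: IHb.
have [t1|t1] := eqVneq t 1; first by subst t; rewrite mixpt1 in Qv hv *; apply: IHa.
have ht01 : 0 < t < 1 by case/andP: ht => ht0 ht1; rewrite !lt_def t0 ht0 ht1 eq_sym t1.
have eab := hv a b t Qa Qb ht01 erefl; subst b.
by rewrite mixptxx in Qv hv *; apply: IHa.
Qed.

End ConvexHull.

Section GridHull.
Variables (R : realType) (d1 d2 : nat) (p1 p2 : nat -> R) (f1 f2 : R -> R).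

Definition lift_pt (r1 : 'S_d1.+1) (r2 : 'S_d2.+1) (c1 c2 : nat -> R) (mu : R) : pt R d1 d2 :=
  (xcoord p1 (Lseq r1 c1), xcoord p2 (Lseq r2 c2), Lseq r1 c1, Lseq r2 c2, mu).

Definition grid_pt (k1 k2 : nat) : pt R d1 d2 :=
  (p1 k1, p2 k2, unary_row R d1 k1, unary_row R d2 k2, f1 (p1 k1) * f2 (p2 k2)).

Definition grid (v : pt R d1 d2) : Prop :=
  exists k1 k2, [/\ (k1 <= d1)%N, (k2 <= d2)%N & v = grid_pt k1 k2].

Definition fill1 (c : nat -> R) (n l : nat) : R := if (l <= n)%N then 1 else c l.

Lemma lift_pt_comb r1 r2 (t : R) c1 c2 c1' c2' mu mu' :
  lift_pt r1 r2 (fun l => t * c1 l + (1 - t) * c1' l) (fun l => t * c2 l + (1 - t) * c2' l)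
    (t * mu + (1 - t) * mu')
  = mixpt t (lift_pt r1 r2 c1 c2 mu) (lift_pt r1 r2 c1' c2' mu').
Proof. by rewrite /lift_pt !Lseq_comb !xcoord_comb. Qed.

Lemma grid_lift_unary r1 r2 s : (s.1 <= d1)%N -> (s.2 <= d2)%N ->
  grid (lift_pt r1 r2 (unary R s.1) (unary R s.2) (psi p1 p2 f1 f2 r1 r2 s)).
Proof.
move=> h1 h2; exists (r1 (inord s.1)), (r2 (inord s.2)); split; rewrite ?leq_ord //.
by rewrite /lift_pt !Lseq_unary // !xcoord_unary_row ?leq_ord.
Qed.

Lemma fill1_comb c n (u : R) : u != 0 ->
  fill1 c n = (fun l => u * fill1 (fun l => u^-1 * c l) n l + (1 - u) * unary R n l).
Proof.
move=> u0; apply: boolp.funext => l; rewrite /fill1 /unary; case: leqP => _.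
  by rewrite !mulr1 addrC subrK.
by rewrite mulr0 addr0 mulVKf.
Qed.

Lemma fill1_succ c n : c n.+1 = 1 -> fill1 c n.+1 = fill1 c n.
Proof.
move=> c1; apply: boolp.funext => l; rewrite /fill1 leq_eqVlt ltnS.
by case: eqP => [->|] //=; rewrite ltnn c1.
Qed.

Lemma fill1_stair_step c1 c2 i s : (i == 1%N) || (i == 2%N) ->
  stair_coord c1 c2 i (stair_step i s) = 1 ->
  fill1 c1 (stair_step i s).1 = fill1 c1 s.1 /\ fill1 c2 (stair_step i s).2 = fill1 c2 s.2.
Proof.
by case/orP => /eqP ->; rewrite /stair_coord /stair_step /= addn0 addn1 => /fill1_succ.
Qed.

Lemma fill1_unary c n : (forall l, (n < l)%N -> c l = 0) -> fill1 c n = unary R n.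
Proof. by move=> c0; apply: boolp.funext => l; rewrite /fill1 /unary; case: leqP => // /c0. Qed.

Lemma fill1_0 c : c 0%N = 1 -> fill1 c 0 = c.
Proof. by move=> c0; apply: boolp.funext => -[|l]. Qed.

Lemma conv_sorted0_stair r1 r2 pi s c1 c2 :
  (forall l, 0 <= c1 l) -> (forall l, 0 <= c2 l) -> all12 pi ->
  stair_sorted c1 c2 s pi 0 ->
  (forall l, (s.1 + count_mem 1%N pi < l)%N -> c1 l = 0) ->
  (forall l, (s.2 + count_mem 2%N pi < l)%N -> c2 l = 0) ->
  (s.1 + count_mem 1%N pi <= d1)%N -> (s.2 + count_mem 2%N pi <= d2)%N ->
  conv grid (lift_pt r1 r2 (fill1 c1 s.1) (fill1 c2 s.2)
    (psi p1 p2 f1 f2 r1 r2 s + stair_sum (psi p1 p2 f1 f2 r1 r2) c1 c2 s pi)).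
Proof.
move=> c1_ge0 c2_ge0 hall hsorted z1 z2 h1 h2.
have [Z1 Z2 ->] := stair_sum_sorted0 (psi p1 p2 f1 f2 r1 r2) c1_ge0 c2_ge0 hall hsorted z1 z2.
rewrite addr0 !fill1_unary //; apply: conv_base; apply: grid_lift_unary.
- exact: leq_trans (leq_addr _ _) h1.
- exact: leq_trans (leq_addr _ _) h2.
Qed.

Lemma conv_sorted_stair r1 r2 pi : forall s c1 c2,
  (forall l, 0 <= c1 l) -> (forall l, 0 <= c2 l) -> all12 pi ->
  stair_sorted c1 c2 s pi 1 ->
  (forall l, (s.1 + count_mem 1%N pi < l)%N -> c1 l = 0) ->
  (forall l, (s.2 + count_mem 2%N pi < l)%N -> c2 l = 0) ->
  (s.1 + count_mem 1%N pi <= d1)%N -> (s.2 + count_mem 2%N pi <= d2)%N ->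
  conv grid (lift_pt r1 r2 (fill1 c1 s.1) (fill1 c2 s.2)
    (psi p1 p2 f1 f2 r1 r2 s + stair_sum (psi p1 p2 f1 f2 r1 r2) c1 c2 s pi)).
Proof.
set ps := psi p1 p2 f1 f2 r1 r2.
elim: pi => [|i pi IH] s c1 c2 c1_ge0 c2_ge0 hall hsorted z1 z2 h1 h2.
  exact: conv_sorted0_stair.
have /andP[hi hall'] := hall; have [hu hs] := hsorted.
set u := stair_coord c1 c2 i (stair_step i s) in hu hs *.
have u_ge0 : 0 <= u by rewrite /u /stair_coord; case: ifP.
have [u0|u_neq0] := eqVneq u 0.
  by apply: conv_sorted0_stair; rewrite //= -/u -u0.
pose c1' l := u^-1 * c1 l; pose c2' l := u^-1 * c2 l.
have [e1 e2] := fill1_stair_step (c1 := c1') (c2 := c2') hi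
  (etrans (stair_coordZ _ _ _ _ _) (mulVf u_neq0)).
have hs' : stair_sorted c1' c2' (stair_step i s) pi 1.
  by rewrite -(mulVf u_neq0); apply: stair_sortedZ; rewrite // lt0r u_neq0.
have c'_ge0 (x : R) : 0 <= x -> 0 <= u^-1 * x by move=> ?; rewrite mulr_ge0 ?invr_ge0.
have IH' : conv grid (lift_pt r1 r2 (fill1 c1' s.1) (fill1 c2' s.2)
    (ps (stair_step i s) + stair_sum ps c1' c2' (stair_step i s) pi)).
  rewrite -e1 -e2; apply: IH; rewrite //= -?addnA //.
  - by move=> l; apply: c'_ge0.
  - by move=> l; apply: c'_ge0.
  - by move=> l /z1; rewrite /c1' => ->; rewrite mulr0.
  - by move=> l /z2; rewrite /c2' => ->; rewrite mulr0.
have -> : ps s + stair_sum ps c1 c2 s (i :: pi) =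
  u * (ps (stair_step i s) + stair_sum ps c1' c2' (stair_step i s) pi) + (1 - u) * ps s.
  by rewrite /= -/u /c1' /c2' stair_sumZ; field.
rewrite (fill1_comb c1 _ u_neq0) (fill1_comb c2 _ u_neq0) lift_pt_comb.
apply: conv_comb IH' _; first by rewrite u_ge0 hu.
apply: conv_base; apply: grid_lift_unary.
- exact: leq_trans (leq_addr _ _) h1.
- exact: leq_trans (leq_addr _ _) h2.
Qed.

End GridHull.

Section Relaxation.
Variables (R : realType) (d1 d2 : nat) (p1 p2 : nat -> R) (f1 f2 : R -> R).
Variables (sg1 : 'S_d1.+1) (sg2 : 'S_d2.+1) (ta1 : 'S_d1.+1) (ta2 : 'S_d2.+1).

Local Notation Q := (relax p1 p2 f1 f2 sg1 sg2 ta1 ta2).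
Local Notation grid := (grid p1 p2 f1 f2).

Lemma relax_convex : convex Q.
Proof.
move=> t [[[[a1 a2] a3] a4] a5] [[[[b1 b2] b3] b4] b5] ht.
case=> hBa1 [hBa2 hsa] [hBb1 [hBb2 hsb]].
split; first exact: inB_comb.
split; first exact: inB_comb.
cbv zeta => pi hpi; have [ua la] := hsa pi hpi; have [ub lb] := hsb pi hpi.
move: ua la ub lb; rewrite !stair_boundE //.
rewrite !zget_Linv_comb !stair_sum_comb.
case/andP: ht => ht0 ht1; have ht1' : 0 <= 1 - t by rewrite subr_ge0.
move=> ua la ub lb; split.
- by have := ler_wpM2l ht0 ua; have := ler_wpM2l ht1' ub; lra.
- by have := ler_wpM2l ht0 la; have := ler_wpM2l ht1' lb; lra.
Qed.

Lemma stair_bound_corner (r1 : 'S_d1.+1) (r2 : 'S_d2.+1) k1 k2 :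
  (k1 <= d1)%N -> (k2 <= d2)%N ->
  stair_bound (psi p1 p2 f1 f2 r1 r2) (Linv r1 (unary_row R d1 k1)) (Linv r2 (unary_row R d2 k2))
    (corner_stair d1 d2 (r1^-1 (inord k1))%g (r2^-1 (inord k2))%g)
  = f1 (p1 k1) * f2 (p2 k2).
Proof.
move=> h1 h2; rewrite stair_boundE; last exact: corner_staircase (leq_ord _) (leq_ord _).
by rewrite !zget_Linv_unary_row // stair_sum_corner /psi /= !perm_inordK.
Qed.

Lemma binary_relax_grid v : binary v.1.1.2 -> binary v.1.2 -> Q v -> grid v.
Proof.
case: v => [[[[x1 x2] z1] z2] mu] /= b1 b2 [[ex1 hz1] [[ex2 hz2] hs]].
have [k1 hk1 ez1] := binary_inDelta_unary b1 hz1.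
have [k2 hk2 ez2] := binary_inDelta_unary b2 hz2.
have {}ex1 : x1 = p1 k1 by rewrite ex1 ez1; exact: xcoord_unary_row.
have {}ex2 : x2 = p2 k2 by rewrite ex2 ez2; exact: xcoord_unary_row.
subst x1 x2 z1 z2; exists k1, k2; split=> //; congr (_, _).
have [hu _] := hs _ (corner_staircase (leq_ord ((sg1^-1)%g (inord k1)))
                                      (leq_ord ((sg2^-1)%g (inord k2)))).
have [_ hl] := hs _ (corner_staircase (leq_ord ((ta1^-1)%g (inord k1)))
                                      (leq_ord ((ta2^-1)%g (inord k2)))).
rewrite !stair_bound_corner // in hu hl.
by apply/eqP; rewrite eq_le hu hl.
Qed.

Lemma relax_grid k1 k2 :
  (forall j, (j < d1)%N -> f1 (p1 (sg1 (inord j))) <= f1 (p1 (sg1 (inord j.+1)))) ->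
  (forall j, (j < d2)%N -> f2 (p2 (sg2 (inord j))) <= f2 (p2 (sg2 (inord j.+1)))) ->
  (forall j, (j < d1)%N -> f1 (p1 (ta1 (inord j))) <= f1 (p1 (ta1 (inord j.+1)))) ->
  (forall j, (j < d2)%N -> f2 (p2 (ta2 (inord j.+1))) <= f2 (p2 (ta2 (inord j)))) ->
  (k1 <= d1)%N -> (k2 <= d2)%N -> Q (grid_pt d1 d2 p1 p2 f1 f2 k1 k2).
Proof.
move=> hs1 hs2 ht1 ht2 h1 h2.
split; first exact: inB_unary_row.
split; first exact: inB_unary_row.
cbv zeta => pi hpi; rewrite !stair_boundE // !zget_Linv_unary_row //; split.
- have := staircase_unary_ge (a := fun j => f1 (p1 (sg1 (inord j))))
    (b := fun j => f2 (p2 (sg2 (inord j)))) hs1 hs2 hpi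
    (leq_ord ((sg1^-1)%g (inord k1))) (leq_ord ((sg2^-1)%g (inord k2))).
  by rewrite !perm_inordK.
- have hb j : (j < d2)%N -> - f2 (p2 (ta2 (inord j))) <= - f2 (p2 (ta2 (inord j.+1))).
    by move=> hj; rewrite lerN2; apply: ht2.
  have := staircase_unary_ge (a := fun j => f1 (p1 (ta1 (inord j))))
    (b := fun j => - f2 (p2 (ta2 (inord j)))) ht1 hb hpi
    (leq_ord ((ta1^-1)%g (inord k1))) (leq_ord ((ta2^-1)%g (inord k2))).
  rewrite !perm_inordK // (stair_sumN (ps := psi p1 p2 f1 f2 ta1 ta2)) => [|j]; last first.
    by rewrite mulrN.
  by rewrite !mulrN /psi /=; lra.
Qed.

Lemma conv_stair_bound (r1 : 'S_d1.+1) (r2 : 'S_d2.+1) x1 x2 z1 z2 :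
  inB p1 x1 z1 -> inB p2 x2 z2 ->
  exists2 pi, staircase d1 d2 pi &
    conv grid (x1, x2, z1, z2, stair_bound (psi p1 p2 f1 f2 r1 r2) (Linv r1 z1) (Linv r2 z2) pi).
Proof.
move=> [ex1 hz1] [ex2 hz2].
set c1 := zget (Linv r1 z1); set c2 := zget (Linv r2 z2).
set pi := merge_stair c1 c2 d1 d2 (d1 + d2) (0%N, 0%N).
have [hall hc1 hc2] : [/\ all12 pi, count_mem 1%N pi = d1 & count_mem 2%N pi = d2].
  have := merge_stair_count c1 c2 (n := d1 + d2) (s := (0%N, 0%N)) (leq0n d1) (leq0n d2).
  by rewrite /= !subn0; apply.
exists pi; first by [].
have c1_ge0 l : 0 <= c1 l by apply: zget_Linv_ge0.
have c2_ge0 l : 0 <= c2 l by apply: zget_Linv_ge0.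
have hsorted : stair_sorted c1 c2 (0%N, 0%N) pi 1.
  apply: merge_stair_sorted => //= [l|l|l|l||].
  - exact: zget_Linv_nonincr.
  - exact: zget_Linv_nonincr.
  - exact: zget_gt.
  - exact: zget_gt.
  - by rewrite -(zget0 (Linv r1 z1)); apply: zget_Linv_nonincr.
  - by rewrite -(zget0 (Linv r2 z2)); apply: zget_Linv_nonincr.
have := conv_sorted_stair p1 p2 f1 f2 r1 r2 c1_ge0 c2_ge0 hall hsorted.
rewrite /= !add0n hc1 hc2 !fill1_0 //.
move=> /(_ (fun l hl => zget_gt _ hl) (fun l hl => zget_gt _ hl) (leqnn d1) (leqnn d2)).
by rewrite /lift_pt /c1 /c2 !Lseq_Linv /xcoord -ex1 -ex2 stair_boundE.
Qed.

Lemma relax_conv v : Q v -> conv grid v.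
Proof.
case: v => [[[[x1 x2] z1] z2] mu] [hB1 [hB2 hs]].
have [piU hU convU] := conv_stair_bound sg1 sg2 hB1 hB2.
have [piL hL convL] := conv_stair_bound ta1 ta2 hB1 hB2.
have [muU _] := hs piU hU; have [_ muL] := hs piL hL.
set U := stair_bound _ _ _ piU in convU muU.
set L := stair_bound _ _ _ piL in convL muL.
have [UL|UL] := eqVneq U L.
  by have -> : mu = U by apply/eqP; rewrite eq_le muU UL muL.
have UL_gt0 : 0 < U - L by rewrite lt_def subr_eq0 UL subr_ge0 (le_trans muL muU).
set th := (mu - L) / (U - L).
have -> : (x1, x2, z1, z2, mu) = mixpt th (x1, x2, z1, z2, U) (x1, x2, z1, z2, L).
  rewrite /mixpt -!mulrDl -!scalerDl addrC subrK !mul1r !scale1r.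
  by congr (_, _); rewrite /th; field; rewrite subr_eq0.
have th0 : 0 <= th by apply: divr_ge0; [rewrite subr_ge0 | exact: ltW].
have th1 : th <= 1 by rewrite /th ler_pdivrMr // mul1r lerD2r.
by apply: conv_comb; rewrite ?th0.
Qed.

End Relaxation.

Unset Implicit Arguments.

Theorem proposition3 (R : realType) (d1 d2 : nat) (p1 p2 : nat -> R)
    (f1 f2 : R -> R)
    (s1 : 'S_d1.+1) (s2 : 'S_d2.+1) (t1 : 'S_d1.+1) (t2 : 'S_d2.+1) :
  (1 <= d1)%N -> (1 <= d2)%N ->
  (forall j : nat, (j < d1)%N -> p1 j < p1 j.+1) ->
  (forall j : nat, (j < d2)%N -> p2 j < p2 j.+1) ->
  (forall j : nat, (j < d1)%N ->
     f1 (p1 (s1 (inord j))) <= f1 (p1 (s1 (inord j.+1)))) ->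
  (forall j : nat, (j < d2)%N ->
     f2 (p2 (s2 (inord j))) <= f2 (p2 (s2 (inord j.+1)))) ->
  (forall j : nat, (j < d1)%N ->
     f1 (p1 (t1 (inord j))) <= f1 (p1 (t1 (inord j.+1)))) ->
  (forall j : nat, (j < d2)%N ->
     f2 (p2 (t2 (inord j))) >= f2 (p2 (t2 (inord j.+1)))) ->
  (* MIP formulation: projection of {relaxation, z binary} onto (x, mu) is S *)
  (forall x1 x2 mu : R,
     ((exists j1 : nat, (j1 <= d1)%N /\ x1 = p1 j1) /\
      (exists j2 : nat, (j2 <= d2)%N /\ x2 = p2 j2) /\
      mu = f1 x1 * f2 x2)
     <->
     (exists (z1 : 'rV[R]_d1) (z2 : 'rV[R]_d2),
        binary z1 /\ binary z2 /\
        relax p1 p2 f1 f2 s1 s2 t1 t2 (x1, x2, z1, z2, mu))) /\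
  (* ideal: every vertex of the LP relaxation has binary z *)
  (forall v : pt R d1 d2, vertex (relax p1 p2 f1 f2 s1 s2 t1 t2) v ->
     binary v.1.1.2 /\ binary v.1.2).
Proof.
move=> _ _ _ _ hs1 hs2 ht1 ht2.
have grid_relax v : grid p1 p2 f1 f2 v -> relax p1 p2 f1 f2 s1 s2 t1 t2 v.
  by case=> k1 [k2 [hk1 hk2 ->]]; apply: relax_grid hs1 hs2 ht1 ht2 hk1 hk2.
split.
- move=> x1 x2 mu; split.
  + case=> -[k1 [hk1 ->]] [[k2 [hk2 ->]] ->].
    exists (unary_row R d1 k1), (unary_row R d2 k2).
    split; first exact: binary_unary_row.
    split; first exact: binary_unary_row.
    exact: relax_grid hs1 hs2 ht1 ht2 hk1 hk2.
  + case=> z1 [z2 [b1 [b2 hQ]]].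
    have [k1 [k2 [hk1 hk2 [-> -> _ _ ->]]]] :=
      binary_relax_grid (v := (x1, x2, z1, z2, mu)) b1 b2 hQ.
    by split; [exists k1 | split; [exists k2 |]].
- move=> v hv.
  have [k1 [k2 [_ _ ->]]] :=
    vertex_conv (@relax_convex _ _ _ p1 p2 f1 f2 s1 s2 t1 t2) grid_relax (relax_conv hv.1) hv.
  by split; apply: binary_unary_row.
Qed.
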